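(* Let $S$ be a bounded ordered set. For each $i\in S$ let $\langle P_i;\nu_i\rangle$ be a bounded ordered set with $|P_i|\ge 2$, and assume that there are elements $0,1$ such that $0$ and $1$ are the least and greatest elements of every $P_i$ and $P_i\cap P_j=\{0,1\}$ for all $i\ne j$ in $S$. For $i\le j$ in $S$ let $\psi_{ij}\colon P_i\to P_j$ be $0$-separating $\{0,1\}$-preserving monotone maps with $\psi_{ii}=\mathrm{id}_{P_i}$ and $\psi_{jk}\circ\psi_{ij}=\psi_{ik}$ for $i\le j\le k$. Fix $j\in S$, let $R_j=\bigcup\{P_i: i\le j\}$, let \[\hat\nu_j=\mathrm{quo}_{R_j}\Bigl(\bigcup_{i\le j}\nu_i\ \cup\ \bigcup_{i\le j}\psi_{ij}\ \cup\ \bigcup_{i\le j}\psi_{ij}^{-1}\Bigr),\] where maps are regarded as subsets of $R_j^2$ via their graphs $\psi_{ij}=\{(x,\psi_{ij}(x)):x\in P_i\}$ and $\psi_{ij}^{-1}=\{(\psi_{ij}(x),x):x\in P_i\}$, and let $\hat\Theta_j=\hat\nu_j\cap\hat\nu_j^{-1}$. Then the map \[\kappa_j\colon\langle R_j/\hat\Theta_j;\hat\nu_j/\hat\Theta_j\rangle\to\langle P_j;\nu_j\rangle,\qquad \kappa_j(x/\hat\Theta_j)=\psi_{ij}(x)\ \text{ for } x\in P_i,\ i\le j,\] is well defined and is an order isomorphism.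
   Context: An ordered set is bounded if it has a least and a greatest element. For bounded ordered sets $P,Q$, a map $\psi\colon P\to Q$ is a $\{0,1\}$-preserving monotone map if it maps least element to least element, greatest to greatest, and is order-preserving; it is $0$-separating if moreover only the least element of $P$ maps to the least element of $Q$. A quasiordering on a nonempty set $H$ is a reflexive, transitive relation $\nu\subseteq H^2$; for $X\subseteq H^2$, $\mathrm{quo}_H(X)$ denotes the least quasiordering on $H$ containing $X$. For a quasiordered set $\langle H;\nu\rangle$ with $\Theta=\nu\cap\nu^{-1}$ (an equivalence relation), $H/\Theta$ is ordered by $(x/\Theta,y/\Theta)\in\nu/\Theta$ iff $(x,y)\in\nu$. *)

Set Implicit Arguments.

Definition order_on {T : Type} (A : T -> Prop) (r : T -> T -> Prop) : Prop :=
  (forall x y, r x y -> A x /\ A y) /\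
  (forall x, A x -> r x x) /\
  (forall x y, r x y -> r y x -> x = y) /\
  (forall x y z, r x y -> r y z -> r x z).

Definition least_greatest {T : Type} (A : T -> Prop) (r : T -> T -> Prop)
  (bot top : T) : Prop :=
  A bot /\ A top /\ (forall x, A x -> r bot x /\ r x top).

Definition zero_sep_01_monotone {T : Type} (A B : T -> Prop)
  (rA rB : T -> T -> Prop) (z o : T) (f : T -> T) : Prop :=
  (forall x, A x -> B (f x)) /\
  f z = z /\ f o = o /\
  (forall x y, rA x y -> rB (f x) (f y)) /\
  (forall x, A x -> f x = z -> x = z).

Definition quasiorder_on {T : Type} (H : T -> Prop) (r : T -> T -> Prop) : Prop :=
  (forall x y, r x y -> H x /\ H y) /\
  (forall x, H x -> r x x) /\
  (forall x y z, r x y -> r y z -> r x z).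

Definition quo {T : Type} (H : T -> Prop) (X : T -> T -> Prop) : T -> T -> Prop :=
  fun x y => forall r, quasiorder_on H r -> (forall a b, X a b -> r a b) -> r x y.

Section Construction.
Variables (S U : Type) (leS : S -> S -> Prop) (P : S -> U -> Prop)
  (nu : S -> U -> U -> Prop) (psi : S -> S -> U -> U) (j : S).

Definition Rj : U -> Prop := fun x => exists i, leS i j /\ P i x.

Definition gen_j : U -> U -> Prop := fun a b =>
  exists i, leS i j /\
    (nu i a b \/ (P i a /\ b = psi i j a) \/ (P i b /\ a = psi i j b)).

Definition hatnu : U -> U -> Prop := quo Rj gen_j.

Definition hatTheta : U -> U -> Prop := fun a b => hatnu a b /\ hatnu b a.

Definition Quot : Type :=
  { C : U -> Prop | exists x, Rj x /\ C = hatTheta x }.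

Definition quot_le (C D : Quot) : Prop :=
  exists x y, proj1_sig C = hatTheta x /\ proj1_sig D = hatTheta y /\ hatnu x y.

Definition Pj : Type := { x : U | P j x }.

End Construction.

From Stdlib Require Import Classical ClassicalEpsilon FunctionalExtensionality
  PropExtensionality ProofIrrelevance.

(* The whole argument is that hatnu_j is the pullback of nu_j along the maps
   psi_ij: a <= b in hatnu_j iff psi_ij a <= psi_kj b in nu_j.  This relation
   is a quasiorder containing the generators, and conversely it is generated
   by them via a -> psi_ij a -> psi_kj b -> b. *)

Lemma sig_proj1_inj {A : Type} {Q : A -> Prop} (a b : {x | Q x}) :
  proj1_sig a = proj1_sig b -> a = b.
Proof. destruct a, b; simpl; apply subset_eq_compat. Qed.

Section LeastQuasiorder.
Variables (T : Type) (H : T -> Prop) (X : T -> T -> Prop).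

Lemma quo_gen a b : X a b -> quo H X a b.
Proof. intros HX r _ Hr; exact (Hr a b HX). Qed.

Lemma quo_trans a b c : quo H X a b -> quo H X b c -> quo H X a c.
Proof.
  intros Hab Hbc r Hq HX.
  apply (proj2 (proj2 Hq)) with b; [apply Hab | apply Hbc]; auto.
Qed.

Lemma quo_min (r : T -> T -> Prop) :
  quasiorder_on H r -> (forall a b, X a b -> r a b) ->
  forall a b, quo H X a b -> r a b.
Proof. intros Hq HX a b Hab; exact (Hab r Hq HX). Qed.

End LeastQuasiorder.

Lemma psi_agree_on_overlap {S U : Type} (leS : S -> S -> Prop)
  (P : S -> U -> Prop) (psi : S -> S -> U -> U) (z o : U) (j : S)
  (Hdisj : forall i k, i <> k -> forall x, P i x -> P k x -> x = z \/ x = o)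
  (psi_z : forall i, leS i j -> psi i j z = z)
  (psi_o : forall i, leS i j -> psi i j o = o) :
  forall i k a, leS i j -> leS k j -> P i a -> P k a -> psi i j a = psi k j a.
Proof.
  intros i k a Hi Hk Pia Pka.
  destruct (classic (i = k)) as [<- | Hne]; [reflexivity |].
  destruct (Hdisj i k Hne a Pia Pka) as [-> | ->].
  - rewrite psi_z, psi_z; auto.
  - rewrite psi_o, psi_o; auto.
Qed.

Section Isomorphism.
Variables (S U : Type) (leS : S -> S -> Prop) (P : S -> U -> Prop)
  (nu : S -> U -> U -> Prop) (psi : S -> S -> U -> U) (j : S).

Hypothesis le_jj : leS j j.
Hypothesis nu_dom : forall i a b, nu i a b -> P i a /\ P i b.
Hypothesis nu_j_order : order_on (P j) (nu j).
Hypothesis psi_maps : forall i a, leS i j -> P i a -> P j (psi i j a).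
Hypothesis psi_mono :
  forall i a b, leS i j -> nu i a b -> nu j (psi i j a) (psi i j b).
Hypothesis psi_jj : forall a, P j a -> psi j j a = a.
Hypothesis psi_agree :
  forall i k a, leS i j -> leS k j -> P i a -> P k a -> psi i j a = psi k j a.

Let hnu := hatnu leS P nu psi j.
Let hth := hatTheta leS P nu psi j.
Let Q := Quot leS P nu psi j.

Definition nu_pullback (a b : U) : Prop :=
  exists i k, leS i j /\ leS k j /\ P i a /\ P k b /\
              nu j (psi i j a) (psi k j b).

Lemma nu_pullback_quasiorder : quasiorder_on (Rj leS P j) nu_pullback.
Proof.
  destruct nu_j_order as (_ & nu_refl & _ & nu_trans).
  split; [| split].
  - intros a b (i & k & Hi & Hk & Pa & Pb & _).
    split; [exists i | exists k]; auto.
  - intros a (i & Hi & Pa); exists i, i; repeat split; auto.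
  - intros a b c (i & k & Hi & Hk & Pa & Pb & Hab) (k' & l & Hk' & Hl & Pb' & Pc & Hbc).
    exists i, l; repeat split; auto.
    apply nu_trans with (psi k j b); auto.
    rewrite (psi_agree k k' b); auto.
Qed.

Lemma gen_nu_pullback a b : gen_j leS P nu psi j a b -> nu_pullback a b.
Proof.
  destruct nu_j_order as (_ & nu_refl & _ & _).
  intros (i & Hi & [Hab | [[Pa ->] | [Pb ->]]]).
  - destruct (nu_dom i a b Hab); exists i, i; repeat split; auto.
  - exists i, j; repeat split; auto; rewrite psi_jj; auto.
  - exists j, i; repeat split; auto; rewrite psi_jj; auto.
Qed.

Lemma hatnu_nu_pullback a b : hnu a b <-> nu_pullback a b.
Proof.
  split.
  - apply quo_min; [apply nu_pullback_quasiorder | apply gen_nu_pullback].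
  - intros (i & k & Hi & Hk & Pa & Pb & Hab).
    assert (Hgen : forall x y, gen_j leS P nu psi j x y -> hnu x y) by apply quo_gen.
    apply quo_trans with (psi i j a).
    { apply Hgen; exists i; auto. }
    apply quo_trans with (psi k j b).
    { apply Hgen; exists j; auto. }
    apply Hgen; exists k; auto.
Qed.

Lemma hatnu_psi i k a b : leS i j -> leS k j -> P i a -> P k b ->
  hnu a b <-> nu j (psi i j a) (psi k j b).
Proof.
  intros Hi Hk Pa Pb; rewrite hatnu_nu_pullback; split.
  - intros (i' & k' & Hi' & Hk' & Pa' & Pb' & Hab).
    rewrite (psi_agree i i' a), (psi_agree k k' b); auto.
  - intro Hab; exists i, k; auto.
Qed.

Lemma hatTheta_psi i k a b : leS i j -> leS k j -> P i a -> P k b ->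
  hth a b <-> psi i j a = psi k j b.
Proof.
  destruct nu_j_order as (_ & nu_refl & nu_antisym & _).
  intros Hi Hk Pa Pb; unfold hth, hatTheta; fold hnu.
  rewrite (hatnu_psi i k a b), (hatnu_psi k i b a); auto; split.
  - intros []; auto.
  - intros ->; auto.
Qed.

Lemma hatTheta_refl a : Rj leS P j a -> hth a a.
Proof. intros (i & Hi & Pa); apply (hatTheta_psi i i); auto. Qed.

Lemma hatTheta_class_eq a b : hth a b -> hth a = hth b.
Proof.
  intros [Hab Hba]; apply functional_extensionality; intro c.
  apply propositional_extensionality; unfold hth, hatTheta; fold hnu.
  split; intros [H1 H2]; split.
  - apply quo_trans with a; auto.
  - apply quo_trans with a; auto.
  - apply quo_trans with b; auto.
  - apply quo_trans with b; auto.
Qed.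

Lemma Quot_rep (C : Q) :
  exists p : S * U, leS (fst p) j /\ P (fst p) (snd p) /\ proj1_sig C = hth (snd p).
Proof. destruct (proj2_sig C) as (x & (i & Hi & Px) & HC); exists (i, x); auto. Qed.

Definition rep (C : Q) : S * U :=
  proj1_sig (constructive_indefinite_description _ (Quot_rep C)).

Lemma rep_spec (C : Q) :
  leS (fst (rep C)) j /\ P (fst (rep C)) (snd (rep C)) /\
  proj1_sig C = hth (snd (rep C)).
Proof. exact (proj2_sig (constructive_indefinite_description _ (Quot_rep C))). Qed.

Definition kappa (C : Q) : Pj P j :=
  exist _ (psi (fst (rep C)) j (snd (rep C)))
    (psi_maps _ _ (proj1 (rep_spec C)) (proj1 (proj2 (rep_spec C)))).

Lemma kappa_eq (C : Q) i x : leS i j -> P i x -> proj1_sig C = hth x ->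
  proj1_sig (kappa C) = psi i j x.
Proof.
  destruct (rep_spec C) as (Hi0 & Px0 & HC0); simpl; intros Hi Px HC.
  apply (proj1 (hatTheta_psi (fst (rep C)) i _ _ Hi0 Hi Px0 Px)).
  rewrite <- HC0, HC; apply hatTheta_refl; exists i; auto.
Qed.

Lemma kappa_surj (y : Pj P j) : exists C, kappa C = y.
Proof.
  destruct y as [y Py].
  assert (Hy : exists x, Rj leS P j x /\ hth y = hth x)
    by (exists y; split; [exists j |]; auto).
  exists (exist _ (hth y) Hy); apply sig_proj1_inj.
  rewrite (kappa_eq _ j y); auto.
Qed.

Lemma kappa_inj (C D : Q) : kappa C = kappa D -> C = D.
Proof.
  intro HCD; apply sig_proj1_inj.
  destruct (rep_spec C) as (Hi & Px & HC), (rep_spec D) as (Hk & Py & HD).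
  rewrite HC, HD; apply hatTheta_class_eq.
  apply (hatTheta_psi (fst (rep C)) (fst (rep D))); auto.
  rewrite <- (kappa_eq C), <- (kappa_eq D), HCD; auto.
Qed.

Lemma kappa_order (C D : Q) :
  quot_le C D <-> nu j (proj1_sig (kappa C)) (proj1_sig (kappa D)).
Proof.
  split.
  - intros (x & y & HC & HD & Hxy).
    apply hatnu_nu_pullback in Hxy as (i & k & Hi & Hk & Px & Py & Hn).
    rewrite (kappa_eq C i x), (kappa_eq D k y); auto.
  - destruct (rep_spec C) as (Hi & Px & HC), (rep_spec D) as (Hk & Py & HD).
    rewrite (kappa_eq C _ _ Hi Px HC), (kappa_eq D _ _ Hk Py HD); intro Hn.
    exists (snd (rep C)), (snd (rep D)); repeat split; auto.
    apply (hatnu_psi (fst (rep C)) (fst (rep D))); auto.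
Qed.

End Isomorphism.

Theorem lemma2
  (S U : Type) (leS : S -> S -> Prop)
  (HS : order_on (fun _ : S => True) leS)
  (HSb : exists b t : S, least_greatest (fun _ => True) leS b t)
  (P : S -> U -> Prop) (nu : S -> U -> U -> Prop) (z o : U)
  (Hnu : forall i, order_on (P i) (nu i))
  (Hbnd : forall i, least_greatest (P i) (nu i) z o)
  (Hcard : forall i, exists x y, P i x /\ P i y /\ x <> y)
  (Hdisj : forall i k, i <> k -> forall x, P i x -> P k x -> x = z \/ x = o)
  (psi : S -> S -> U -> U)
  (Hpsi : forall i k, leS i k ->
     zero_sep_01_monotone (P i) (P k) (nu i) (nu k) z o (psi i k))
  (Hid : forall i x, P i x -> psi i i x = x)
  (Hcomp : forall i k l, leS i k -> leS k l -> forall x, P i x ->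
     psi k l (psi i k x) = psi i l x)
  (j : S) :
  exists kappa : Quot leS P nu psi j -> Pj P j,
    (forall (C : Quot leS P nu psi j) i x, leS i j -> P i x ->
        proj1_sig C = hatTheta leS P nu psi j x ->
        proj1_sig (kappa C) = psi i j x) /\
    (forall y : Pj P j, exists C, kappa C = y) /\
    (forall C D, kappa C = kappa D -> C = D) /\
    (forall C D : Quot leS P nu psi j, quot_le C D <->
                 nu j (proj1_sig (kappa C)) (proj1_sig (kappa D))).
Proof.
  assert (le_jj : leS j j) by (apply HS; exact I).
  assert (nu_dom : forall i a b, nu i a b -> P i a /\ P i b) by (intro i; apply Hnu).
  assert (psi_maps : forall i a, leS i j -> P i a -> P j (psi i j a))
    by (intros i a Hi; apply (Hpsi i j Hi)).
  assert (psi_mono : forall i a b, leS i j -> nu i a b -> nu j (psi i j a) (psi i j b))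
    by (intros i a b Hi; apply (Hpsi i j Hi)).
  assert (psi_agree : forall i k a, leS i j -> leS k j -> P i a -> P k a ->
                       psi i j a = psi k j a).
  { apply (psi_agree_on_overlap leS P psi z o j Hdisj); intros i Hi;
      destruct (Hpsi i j Hi) as (_ & Hz & Ho & _); assumption. }
  exists (kappa S U leS P nu psi j psi_maps); split; [| split; [| split]].
  - intros C i x; apply kappa_eq; auto.
  - apply kappa_surj; auto.
  - apply kappa_inj; auto.
  - apply kappa_order; auto.
Qed.
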